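(* Let $\lambda_1,\lambda_2,\lambda_3$ be pairwise distinct nonzero complex numbers, $J_1=\mathrm{diag}(\lambda_1,\lambda_2,\lambda_3)$, and $h>0$. Define $$T_1=\lambda_1(e^{\lambda_2h}-e^{\lambda_3h})+\lambda_2(e^{\lambda_3h}-e^{\lambda_1h})+\lambda_3(e^{\lambda_1h}-e^{\lambda_2h}),$$ $$T_2=\lambda_1(1-e^{\lambda_1h})(e^{\lambda_2h}-e^{\lambda_3h})+\lambda_2(1-e^{\lambda_2h})(e^{\lambda_3h}-e^{\lambda_1h})+\lambda_3(1-e^{\lambda_3h})(e^{\lambda_1h}-e^{\lambda_2h}),$$ $C_1=\lambda_2-\lambda_1+\lambda_1e^{\lambda_1h}-\lambda_2e^{\lambda_2h}$, and $$\theta=\frac{T_1}{T_2},\qquad \phi=\frac{e^{\lambda_1h}-e^{\lambda_2h}}{\lambda_1-\lambda_2+\theta C_1},\qquad \psi=e^{\lambda_3h}-\phi\lambda_3\big(\theta e^{\lambda_3h}+1-\theta\big).$$ Then (whenever these expressions are defined and the scheme is uniquely solvable for $\mathbf{x}_{k+1}$) the difference scheme $$\frac{\mathbf{x}_{k+1}-\psi\mathbf{x}_k}{\phi}=J_1\big[\theta\mathbf{x}_{k+1}+(1-\theta)\mathbf{x}_k\big]$$ is exact for the system $\mathbf{x}'=J_1\mathbf{x}$, $\mathbf{x}(t)=(x(t),y(t),z(t))^T$.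
   Context: A one-step difference scheme with step size $h>0$ for $\mathbf{x}'=M\mathbf{x}$ is called exact if for every initial vector $\mathbf{x}_0$ the sequence $(\mathbf{x}_k)$ it generates satisfies $\mathbf{x}_k=\mathbf{x}(kh)$ for all $k\ge 0$, where $\mathbf{x}(t)$ solves $\mathbf{x}'=M\mathbf{x}$, $\mathbf{x}(0)=\mathbf{x}_0$. *)

From Stdlib Require Export Reals.
From Coquelicot Require Export Coquelicot.

Open Scope C_scope.

Definition cexp (z : C) : C :=
  (exp (Re z) * cos (Im z), exp (Re z) * sin (Im z))%R.

Definition vec3 : Type := (C * C * C)%type.

Definition vadd (v w : vec3) : vec3 :=
  let '(a1, a2, a3) := v in let '(b1, b2, b3) := w in (a1 + b1, a2 + b2, a3 + b3).
Definition vscale (c : C) (v : vec3) : vec3 :=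
  let '(a1, a2, a3) := v in (c * a1, c * a2, c * a3).
Definition vsub (v w : vec3) : vec3 := vadd v (vscale (-1) w).

Definition diag3 (l1 l2 l3 : C) (v : vec3) : vec3 :=
  let '(a1, a2, a3) := v in (l1 * a1, l2 * a2, l3 * a3).

Section Coeffs.
Variables (l1 l2 l3 : C) (h : R).
Let e1 := cexp (l1 * RtoC h).
Let e2 := cexp (l2 * RtoC h).
Let e3 := cexp (l3 * RtoC h).

Definition T1 : C := l1 * (e2 - e3) + l2 * (e3 - e1) + l3 * (e1 - e2).
Definition T2 : C :=
  l1 * (1 - e1) * (e2 - e3) + l2 * (1 - e2) * (e3 - e1) + l3 * (1 - e3) * (e1 - e2).
Definition C1 : C := l2 - l1 + l1 * e1 - l2 * e2.
Definition theta : C := T1 / T2.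
Definition phi_den : C := l1 - l2 + theta * C1.
Definition phi : C := (e1 - e2) / phi_den.
Definition psi : C := e3 - phi * l3 * (theta * e3 + 1 - theta).

Definition scheme_step (xk xk1 : vec3) : Prop :=
  vscale (/ phi) (vsub xk1 (vscale psi xk))
  = diag3 l1 l2 l3 (vadd (vscale theta xk1) (vscale (1 - theta) xk)).
End Coeffs.


(** The exact flow is [x(t) = diag(e^(l_i t)) x(0)] (for each mode, [e^(-l t) z(t)]
    has zero derivative), so [x(t + h) = diag(e_i) x(t)] with [e_i = e^(l_i h)].
    On the [i]-th mode this flow satisfies the scheme iff
    [psi = e_i - phi l_i (theta e_i + 1 - theta)].  The definition of [psi] is this
    identity for [i = 3], the value of [phi] makes the right-hand sides for [i = 1]
    and [i = 2] agree, and the value of [theta] those for [i = 1] and [i = 3].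
    Unique solvability then forces the iterates onto the exact flow. *)

Lemma is_derive_fst {U V : NormedModule R_AbsRing} (f : R -> U * V) (t : R) (d : U * V) :
  is_derive f t d -> is_derive (fun s => fst (f s)) t (fst d).
Proof.
  intros Hf.
  apply filterdiff_ext_lin with (fun y => fst (scal y d)); [|reflexivity].
  apply (filterdiff_comp' f fst t _ fst Hf), filterdiff_linear, is_linear_fst.
Qed.

Lemma is_derive_snd {U V : NormedModule R_AbsRing} (f : R -> U * V) (t : R) (d : U * V) :
  is_derive f t d -> is_derive (fun s => snd (f s)) t (snd d).
Proof.
  intros Hf.
  apply filterdiff_ext_lin with (fun y => snd (scal y d)); [|reflexivity].
  apply (filterdiff_comp' f snd t _ snd Hf), filterdiff_linear, is_linear_snd.
Qed.

Lemma is_derive_zero_const {V : NormedModule R_AbsRing} (f : R -> V) :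
  (forall t, is_derive f t zero) -> forall t, f t = f 0%R.
Proof.
  intros Hf t.
  destruct (Rtotal_order t 0) as [Ht | [-> | Ht]].
  - apply (eq_is_derive f t 0); [intros; apply Hf | exact Ht].
  - reflexivity.
  - symmetry; apply (eq_is_derive f 0 t); [intros; apply Hf | exact Ht].
Qed.

Lemma cexp_add (z w : C) : cexp (z + w) = cexp z * cexp w.
Proof.
  destruct z as [a b], w as [c d].
  unfold cexp, Cplus, Cmult; simpl.
  rewrite exp_plus, cos_plus, sin_plus.
  f_equal; ring.
Qed.

Lemma cexp_0 : cexp 0 = 1.
Proof.
  unfold cexp; simpl.
  rewrite exp_0, cos_0, sin_0.
  apply injective_projections; simpl; ring.
Qed.

Lemma cexp_mul_RtoC (l : C) (t : R) :
  cexp (l * RtoC t) = (exp (Re l * t) * cos (Im l * t), exp (Re l * t) * sin (Im l * t))%R.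
Proof.
  destruct l as [p q].
  unfold cexp, RtoC, Cmult; simpl.
  f_equal; f_equal; f_equal; ring.
Qed.

Lemma rotating_ode_invariants (a b : R -> R) (p q : R) :
  (forall t, is_derive a t (p * a t - q * b t)%R) ->
  (forall t, is_derive b t (p * b t + q * a t)%R) ->
  forall t,
    is_derive (fun s => exp (- p * s) * (cos (- q * s) * a s - sin (- q * s) * b s))%R t 0%R /\
    is_derive (fun s => exp (- p * s) * (sin (- q * s) * a s + cos (- q * s) * b s))%R t 0%R.
Proof.
  intros Ha Hb t.
  split; (auto_derive;
    [ repeat split; [exists (p * a t - q * b t)%R | exists (p * b t + q * a t)%R]; auto
    | replace (Derive (fun s : R => a s) t) with (p * a t - q * b t)%R
        by (symmetry; apply is_derive_unique, Ha);
      replace (Derive (fun s : R => b s) t) with (p * b t + q * a t)%R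
        by (symmetry; apply is_derive_unique, Hb);
      ring ]).
Qed.

Lemma linear_ode_invariant (z : R -> C) (l : C) :
  (forall t, is_derive z t (l * z t)) -> forall t, cexp (- l * RtoC t) * z t = z 0%R.
Proof.
  intros Hz.
  destruct l as [p q].
  set (a := fun t => Re (z t)).
  set (b := fun t => Im (z t)).
  assert (Ha : forall t, is_derive a t (p * a t - q * b t)%R).
  { intros t. exact (is_derive_fst (U := R_NormedModule) (V := R_NormedModule) z t _ (Hz t)). }
  assert (Hb : forall t, is_derive b t (p * b t + q * a t)%R).
  { intros t. exact (is_derive_snd (U := R_NormedModule) (V := R_NormedModule) z t _ (Hz t)). }
  set (w := fun t => cexp (- (p, q) * RtoC t) * z t).
  assert (Hw : forall t, is_derive (fun s => Re (w s)) t 0%R /\ is_derive (fun s => Im (w s)) t 0%R).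
  { intros t. destruct (rotating_ode_invariants a b p q Ha Hb t) as [Hre Him].
    split; [eapply is_derive_ext, Hre | eapply is_derive_ext, Him];
      intros s; unfold w, a, b; rewrite cexp_mul_RtoC; unfold Re, Im; simpl; ring. }
  intros t.
  change (w t = z 0%R).
  replace (z 0%R) with (w 0%R)
    by (unfold w; rewrite Cmult_0_r, cexp_0; apply Cmult_1_l).
  apply injective_projections;
    [apply (is_derive_zero_const (fun s => Re (w s))) | apply (is_derive_zero_const (fun s => Im (w s)))];
    intros s; apply Hw.
Qed.

Lemma linear_ode_solution (z : R -> C) (l : C) :
  (forall t, is_derive z t (l * z t)) -> forall t, z t = cexp (l * RtoC t) * z 0%R.
Proof.
  intros Hz t.
  rewrite <- (linear_ode_invariant z l Hz t), Cmult_assoc, <- cexp_add.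
  replace (l * RtoC t + - l * RtoC t) with (RtoC 0) by ring.
  rewrite cexp_0. ring.
Qed.

Lemma diag3_comp (a1 a2 a3 b1 b2 b3 : C) (v : vec3) :
  diag3 a1 a2 a3 (diag3 b1 b2 b3 v) = diag3 (a1 * b1) (a2 * b2) (a3 * b3) v.
Proof.
  destruct v as [[v1 v2] v3]; simpl.
  f_equal; [f_equal|]; ring.
Qed.

Lemma diagonal_ode_solution (l1 l2 l3 : C) (sol : R -> vec3) :
  (forall t, is_derive sol t (diag3 l1 l2 l3 (sol t))) ->
  forall t, sol t = diag3 (cexp (l1 * RtoC t)) (cexp (l2 * RtoC t)) (cexp (l3 * RtoC t)) (sol 0%R).
Proof.
  intros Hsol.
  assert (Hsol' : forall t, is_derive sol t
    ((l1 * fst (fst (sol t)), l2 * snd (fst (sol t))), l3 * snd (sol t))).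
  { intros t. specialize (Hsol t). destruct (sol t) as [[y1 y2] y3]. exact Hsol. }
  assert (H12 : forall t, is_derive (fun s => fst (sol s)) t
    (l1 * fst (fst (sol t)), l2 * snd (fst (sol t)))).
  { intros t. exact (is_derive_fst sol t _ (Hsol' t)). }
  intros t.
  rewrite (surjective_pairing (sol t)), (surjective_pairing (fst (sol t))).
  rewrite (linear_ode_solution (fun s => fst (fst (sol s))) l1),
    (linear_ode_solution (fun s => snd (fst (sol s))) l2),
    (linear_ode_solution (fun s => snd (sol s)) l3).
  - destruct (sol 0%R) as [[y1 y2] y3]. reflexivity.
  - intros s. exact (is_derive_snd sol s _ (Hsol' s)).
  - intros s. exact (is_derive_snd _ s _ (H12 s)).
  - intros s. exact (is_derive_fst _ s _ (H12 s)).
Qed.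

Lemma diagonal_ode_shift (l1 l2 l3 : C) (sol : R -> vec3) (h : R) :
  (forall t, is_derive sol t (diag3 l1 l2 l3 (sol t))) ->
  forall t, sol (t + h)%R
    = diag3 (cexp (l1 * RtoC h)) (cexp (l2 * RtoC h)) (cexp (l3 * RtoC h)) (sol t).
Proof.
  intros Hsol t.
  rewrite (diagonal_ode_solution l1 l2 l3 sol Hsol (t + h)), (diagonal_ode_solution l1 l2 l3 sol Hsol t).
  rewrite diag3_comp, RtoC_plus, !Cmult_plus_distr_l, !cexp_add.
  f_equal; ring.
Qed.

Lemma scheme_mode_exact (ph th l e x : C) :
  ph <> 0 ->
  / ph * (e * x + -1 * ((e - ph * l * (th * e + 1 - th)) * x)) = l * (th * (e * x) + (1 - th) * x).
Proof. intros Hph. field. exact Hph. Qed.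

Section ExactCoefficients.

Variables (l1 l2 l3 : C) (h : R).
Hypotheses (HT2 : T2 l1 l2 l3 h <> 0) (Hden : phi_den l1 l2 l3 h <> 0).

Local Notation e1 := (cexp (l1 * RtoC h)).
Local Notation e2 := (cexp (l2 * RtoC h)).
Local Notation e3 := (cexp (l3 * RtoC h)).
Local Notation th := (theta l1 l2 l3 h).

Definition exact_psi (l e : C) : C := e - phi l1 l2 l3 h * l * (th * e + 1 - th).

Lemma exact_psi_12 : exact_psi l1 e1 = exact_psi l2 e2.
Proof.
  unfold exact_psi, phi, phi_den, C1 in *.
  field. exact Hden.
Qed.

Lemma theta_spec :
  (e1 - e3) * phi_den l1 l2 l3 h = (e1 - e2) * (l1 * (th * e1 + 1 - th) - l3 * (th * e3 + 1 - th)).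
Proof.
  unfold phi_den, theta, C1, T1, T2 in *.
  field. exact HT2.
Qed.

Lemma exact_psi_13 : exact_psi l1 e1 = exact_psi l3 e3.
Proof.
  unfold exact_psi, phi. apply Ceq_minus.
  transitivity (((e1 - e3) * phi_den l1 l2 l3 h
                 - (e1 - e2) * (l1 * (th * e1 + 1 - th) - l3 * (th * e3 + 1 - th)))
                / phi_den l1 l2 l3 h).
  - field. exact Hden.
  - rewrite theta_spec. field. exact Hden.
Qed.

Hypothesis (Hphi : phi l1 l2 l3 h <> 0).

Lemma scheme_step_exact (v : vec3) : scheme_step l1 l2 l3 h v (diag3 e1 e2 e3 v).
Proof.
  destruct v as [[v1 v2] v3].
  unfold scheme_step, vsub, vadd, vscale, diag3.
  assert (Hpsi3 : psi l1 l2 l3 h = exact_psi l3 e3) by reflexivity.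
  assert (Hpsi1 : psi l1 l2 l3 h = exact_psi l1 e1) by now rewrite exact_psi_13.
  assert (Hpsi2 : psi l1 l2 l3 h = exact_psi l2 e2) by now rewrite <- exact_psi_12.
  f_equal; [f_equal|];
    [rewrite Hpsi1 | rewrite Hpsi2 | rewrite Hpsi3];
    apply scheme_mode_exact, Hphi.
Qed.

End ExactCoefficients.

Theorem theorem4 (l1 l2 l3 : C) (h : R) :
  l1 <> 0 -> l2 <> 0 -> l3 <> 0 ->
  l1 <> l2 -> l2 <> l3 -> l1 <> l3 ->
  (0 < h)%R ->
  (* the expressions are defined *)
  T2 l1 l2 l3 h <> 0 ->
  phi_den l1 l2 l3 h <> 0 ->
  phi l1 l2 l3 h <> 0 ->
  (* the scheme is uniquely solvable for x_{k+1} *)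
  (forall v : vec3, exists! w : vec3, scheme_step l1 l2 l3 h v w) ->
  (* exactness *)
  forall (x0 : vec3) (xs : nat -> vec3) (sol : R -> vec3),
    xs O = x0 ->
    (forall k, scheme_step l1 l2 l3 h (xs k) (xs (S k))) ->
    sol 0%R = x0 ->
    (forall t : R, is_derive sol t (diag3 l1 l2 l3 (sol t))) ->
    forall k : nat, xs k = sol (INR k * h)%R.
Proof.
  intros _ _ _ _ _ _ _ HT2 Hden Hphi Huniq x0 xs sol Hxs0 Hxs Hsol0 Hsol k.
  induction k as [|k IH].
  - simpl. rewrite Rmult_0_l, Hxs0, Hsol0. reflexivity.
  - destruct (Huniq (xs k)) as [w [_ Hw]].
    rewrite S_INR, Rmult_plus_distr_r, Rmult_1_l, (diagonal_ode_shift l1 l2 l3 sol h Hsol), <- IH.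
    rewrite <- (Hw _ (Hxs k)).
    apply Hw, scheme_step_exact; assumption.
Qed.
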